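(* Let $G'$ be a context-free grammar with start symbol $s$, no $\varepsilon$-rules and no useless nonterminal. Then there exists a prefix $\ell$ of $G'$ such that the explanation graph $\mathrm{Expl}(G_\ell)$ (defined in the context) is cyclic if and only if the left-corner relation of $G'$ is cyclic.
   Context: Grammar: $G'$ has finite terminal set $\Sigma$, finite nonterminal set $N$, start symbol $s\in N$; every rule $A\to\alpha$ has $\alpha\in(N\cup\Sigma)^+$; a rule is useless if it occurs in no derivation of a terminal string from $s$, and a nonterminal is useless if all its rules are useless. Nonterminals $X,Y$ are in the direct left-corner relation if there is a rule $X\to Y\beta$; the left-corner relation $\to_L$ is its transitive closure; it is cyclic if $X\to_L X$ for some nonterminal $X$. A prefix is a nonempty string $\ell\in\Sigma^+$ that is an initial segment of some terminal string derivable from $s$. Explanation graph. For a prefix $\ell$ consider ground atoms $q(\ell)$, $p(\beta,u,v)$ with $\beta\in(N\cup\Sigma)^*$, $u,v\in\Sigma^*$, and switch atoms $m(A\to\alpha)$ for rules of $G'$. Consider all ground clauses: (C0) $q(\ell)\leftarrow p(s,\ell,\varepsilon)$; (C1) $p(\varepsilon,u,u)\leftarrow$ (empty body), for all $u$; (C2) for $a\in\Sigma$: $p(a\beta,a,\varepsilon)\leftarrow$ (empty body); and $p(a\beta,av,w)\leftarrow p(\beta,v,w)$ whenever $v\neq\varepsilon$; (C3) for $A\in N$ and each rule $A\to\alpha$: $p(A\beta,u,\varepsilon)\leftarrow m(A\to\alpha)\wedge p(\alpha,u,\varepsilon)$; and $p(A\beta,u,w)\leftarrow m(A\to\alpha)\wedge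 p(\alpha,u,v)\wedge p(\beta,v,w)$ whenever $v\neq\varepsilon$. A $p$- or $q$-atom is provable if it lies in the least Herbrand model of these clauses with all $m$-atoms taken as true. (These clauses describe a top-down prefix parser which succeeds as soon as the input is consumed.) The defined goals of $\mathrm{Expl}(G_\ell)$ form the smallest set containing $q(\ell)$ and such that whenever $H$ is a defined goal and $H\leftarrow\alpha$ is one of the clauses above whose $p$-atoms are all provable, every $p$-atom of $\alpha$ is a defined goal. The defining formula of a defined goal $H$ is $H\Leftrightarrow\alpha_1\vee\dots\vee\alpha_M$, where $\alpha_1,\dots,\alpha_M$ are the bodies of all such clauses with head $H$ whose $p$-atoms are all provable. $H$ is a parent of $C$ if the defined goal $C$ occurs in some $\alpha_i$; the ancestor relation is the transitive closure of the parent relation; $\mathrm{Expl}(G_\ell)$ is cyclic if some defined goal is its own ancestor. *)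

From Stdlib Require Import List Relations.
From Stdlib Require Import FinFun.
Import ListNotations.
Set Implicit Arguments.

Section Grammar.
Variables (T NT : Type).

Definition symbol := (NT + T)%type.

Record grammar := Grammar {
  rules : list (NT * list symbol);
  start : NT }.

Variable G : grammar.

Definition step (x y : list symbol) : Prop :=
  exists p q A alpha, In (A, alpha) (rules G) /\
    x = p ++ inl A :: q /\ y = p ++ alpha ++ q.

Definition derives := clos_refl_trans (list symbol) step.

Definition terminals (w : list T) : list symbol := map (@inr NT T) w.

Definition no_eps_rules : Prop :=
  forall A alpha, In (A, alpha) (rules G) -> alpha <> [].

Definition useful_rule (A : NT) (alpha : list symbol) : Prop :=
  exists p q w,
    derives [inl (start G)] (p ++ inl A :: q) /\
    derives (p ++ alpha ++ q) (terminals w).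

Definition useless_rule A alpha := ~ useful_rule A alpha.

Definition useless_nonterminal (A : NT) : Prop :=
  forall alpha, In (A, alpha) (rules G) -> useless_rule A alpha.

Definition no_useless_nonterminal : Prop :=
  forall A, ~ useless_nonterminal A.

Definition direct_lc (X Y : NT) : Prop :=
  exists beta, In (X, inl Y :: beta) (rules G).

Definition left_corner := clos_trans NT direct_lc.

Definition lc_cyclic : Prop := exists X, left_corner X X.

Definition is_prefix (l : list T) : Prop :=
  l <> [] /\ exists w', derives [inl (start G)] (terminals (l ++ w')).

(* ground atoms: q(l) and p(beta,u,v) *)
Definition patom := (list symbol * list T * list T)%type.

Inductive goal :=
| GQ : list T -> goal
| GP : patom -> goal.

(* ground clauses: [clause H body] with body the list of p-atoms of the body
   (switch atoms m(A->alpha) are omitted, they are taken to be true) *)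
Inductive clause : goal -> list patom -> Prop :=
| C0 : forall l, clause (GQ l) [([inl (start G)], l, [])]
| C1 : forall u, clause (GP ([], u, u)) []
| C2a : forall a beta, clause (GP (inr a :: beta, [a], [])) []
| C2b : forall a beta v w, v <> [] ->
    clause (GP (inr a :: beta, a :: v, w)) [(beta, v, w)]
| C3a : forall A alpha beta u, In (A, alpha) (rules G) ->
    clause (GP (inl A :: beta, u, [])) [(alpha, u, [])]
| C3b : forall A alpha beta u v w, In (A, alpha) (rules G) -> v <> [] ->
    clause (GP (inl A :: beta, u, w)) [(alpha, u, v); (beta, v, w)].

Inductive provable : goal -> Prop :=
| prov_intro : forall H body, clause H body ->
    (forall x, In x body -> provable (GP x)) -> provable H.

Definition usable_clause (H : goal) (body : list patom) : Prop :=
  clause H body /\ forall x, In x body -> provable (GP x).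

Inductive defined_goal (l : list T) : goal -> Prop :=
| def_root : defined_goal l (GQ l)
| def_step : forall H body x, defined_goal l H -> usable_clause H body ->
    In x body -> defined_goal l (GP x).

Definition parent (l : list T) (H C : goal) : Prop :=
  defined_goal l H /\ defined_goal l C /\
  exists body x, usable_clause H body /\ In x body /\ C = GP x.

Definition ancestor (l : list T) := clos_trans goal (parent l).

Definition expl_cyclic (l : list T) : Prop :=
  exists C, defined_goal l C /\ ancestor l C C.

End Grammar.

From Stdlib Require Import List Relations FinFun Classical Lia.
Import ListNotations.
Set Implicit Arguments.

(* If X is left-corner cyclic, take a prefix that leads the top-down parser
   to the goal p(X s, t, eps), where t is a terminal with which X can begin.
   Each left-corner step X -> Y beta is a clause p(X s, t, eps) <- p(Y beta, t,
   eps) whose body stays provable, so the cycle X ->L X becomes a cycle of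
   goals.  Conversely, along every parent edge the remaining input does not
   grow, and without epsilon-rules it stays the same only when the parser
   descends into a rule of the leading nonterminal; a cycle of goals is
   therefore a cycle of such descents, i.e. a left-corner cycle. *)

Lemma app_neq_nil_r (A : Type) (x w : list A) : w <> [] -> x ++ w <> [].
Proof. intros Hw E. apply Hw, (app_eq_nil _ _ E). Qed.

Section Grammar.
Variables (T NT : Type) (G : grammar T NT).
Local Notation sym := (symbol T NT).

Inductive yields : list sym -> list T -> Prop :=
| yields_nil : yields [] []
| yields_term a g x : yields g x -> yields (inr a :: g) (a :: x)
| yields_nonterm A alpha g y x : In (A, alpha) (rules G) ->
    yields alpha y -> yields g x -> yields (inl A :: g) (y ++ x).

Lemma yields_app_inv g1 g2 x : yields (g1 ++ g2) x ->
  exists x1 x2, x = x1 ++ x2 /\ yields g1 x1 /\ yields g2 x2.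
Proof.
  revert x; induction g1 as [|s g1 IH]; intros x H.
  - exists [], x; repeat split; [constructor | exact H].
  - inversion H as [|a g x' Hg|A alpha g y x' Hr Hy Hg]; subst.
    + destruct (IH _ Hg) as (x1 & x2 & -> & Hx1 & Hx2).
      exists (a :: x1), x2; repeat split; auto; constructor; exact Hx1.
    + destruct (IH _ Hg) as (x1 & x2 & -> & Hx1 & Hx2).
      exists (y ++ x1), x2; repeat split; auto.
      * apply app_assoc.
      * econstructor; eauto.
Qed.

Lemma yields_app g1 x1 g2 x2 :
  yields g1 x1 -> yields g2 x2 -> yields (g1 ++ g2) (x1 ++ x2).
Proof.
  induction 1; intros; simpl; auto.
  - constructor; auto.
  - rewrite <- app_assoc; econstructor; eauto.
Qed.

Lemma yields_terminals w : yields (terminals NT w) w.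
Proof. induction w; constructor; auto. Qed.

Lemma yields_of_step g g' x : step G g g' -> yields g' x -> yields g x.
Proof.
  intros (p & q & A & alpha & Hr & -> & ->) H.
  destruct (yields_app_inv _ _ H) as (x1 & x2 & -> & Hp & H2).
  destruct (yields_app_inv _ _ H2) as (y1 & y2 & -> & Ha & Hq).
  apply yields_app; auto; econstructor; eauto.
Qed.

Lemma derives_yields g w : derives G g (terminals NT w) -> yields g w.
Proof.
  intro H; apply clos_rt_rt1n in H.
  remember (terminals NT w) as z; induction H; subst.
  - apply yields_terminals.
  - eapply yields_of_step; eauto.
Qed.

Inductive left_corner_terminal : sym -> T -> Prop :=
| lct_term t : left_corner_terminal (inr t) t
| lct_nonterm A a alpha t : In (A, a :: alpha) (rules G) ->
    left_corner_terminal a t -> left_corner_terminal (inl A) t.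

Lemma left_corner_terminal_of_left_corner A B t :
  left_corner G A B -> left_corner_terminal (inl B) t ->
  left_corner_terminal (inl A) t.
Proof.
  induction 1 as [A B [beta Hr]|]; auto.
  intro; econstructor; eauto.
Qed.

(* [reaches X g x]: [g] derives a sentential form [x ++ X :: _] with [x]
   terminal.  The constructors mirror the descent of the top-down parser. *)
Inductive reaches (X : NT) : list sym -> list T -> Prop :=
| reaches_term a g x : reaches X g x -> reaches X (inr a :: g) (a :: x)
| reaches_skip A alpha g y x : In (A, alpha) (rules G) -> yields alpha y ->
    reaches X g x -> reaches X (inl A :: g) (y ++ x)
| reaches_here g : reaches X (inl X :: g) []
| reaches_down A alpha g x : In (A, alpha) (rules G) ->
    reaches X alpha x -> reaches X (inl A :: g) x.

Lemma reaches_app_inv X g1 g2 x : reaches X (g1 ++ g2) x ->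
  reaches X g1 x \/
  exists x1 x2, x = x1 ++ x2 /\ yields g1 x1 /\ reaches X g2 x2.
Proof.
  revert x; induction g1 as [|s g1 IH]; intros x H.
  - right; exists [], x; repeat split; [constructor | exact H].
  - inversion H as [a g x' Hg|A alpha g y x' Hr Hy Hg| |]; subst.
    + destruct (IH _ Hg) as [Hx | (x1 & x2 & -> & Hx1 & Hx2)].
      * left; constructor; exact Hx.
      * right; exists (a :: x1), x2; repeat split; auto; constructor; exact Hx1.
    + destruct (IH _ Hg) as [Hx | (x1 & x2 & -> & Hx1 & Hx2)].
      * left; econstructor; eauto.
      * right; exists (y ++ x1), x2; repeat split; auto.
        -- apply app_assoc.
        -- econstructor; eauto.
    + left; constructor.
    + left; eapply reaches_down; eauto.
Qed.

Lemma reaches_app_l X g1 g2 x : reaches X g1 x -> reaches X (g1 ++ g2) x.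
Proof.
  induction 1; simpl.
  - constructor; auto.
  - econstructor; eauto.
  - constructor.
  - eapply reaches_down; eauto.
Qed.

Lemma reaches_app_r X g1 x1 g2 x2 :
  yields g1 x1 -> reaches X g2 x2 -> reaches X (g1 ++ g2) (x1 ++ x2).
Proof.
  induction 1; intros; simpl; auto.
  - constructor; auto.
  - rewrite <- app_assoc; econstructor; eauto.
Qed.

Lemma reaches_of_step X g g' x : step G g g' -> reaches X g' x -> reaches X g x.
Proof.
  intros (p & q & A & alpha & Hr & -> & ->) H.
  destruct (reaches_app_inv _ _ H) as [H1 | (x1 & x2 & -> & Hp & H2)].
  - apply reaches_app_l; exact H1.
  - apply reaches_app_r; auto.
    destruct (reaches_app_inv _ _ H2) as [H3 | (y1 & y2 & -> & Ha & Hq)].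
    + eapply reaches_down; eauto.
    + econstructor; eauto.
Qed.

Lemma derives_reaches X g p q wp :
  derives G g (p ++ inl X :: q) -> yields p wp -> reaches X g wp.
Proof.
  intros H Hp; apply clos_rt_rt1n in H.
  remember (p ++ inl X :: q) as z; induction H; subst.
  - rewrite <- (app_nil_r wp); apply reaches_app_r; [exact Hp | constructor].
  - eapply reaches_of_step; eauto.
Qed.

Lemma usable_clause1 H x :
  clause G H [x] -> provable G (GP x) -> usable_clause G H [x].
Proof. intros Hc Hx; split; [exact Hc | intros z [<-|[]]; exact Hx]. Qed.

Lemma usable_clause2 H x y : clause G H [x; y] ->
  provable G (GP x) -> provable G (GP y) -> usable_clause G H [x; y].
Proof. intros Hc Hx Hy; split; [exact Hc | intros z [<-|[<-|[]]]; auto]. Qed.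

Lemma provable_clause1 H x : clause G H [x] -> provable G (GP x) -> provable G H.
Proof. intros Hc Hx; destruct (usable_clause1 Hc Hx); eapply prov_intro; eauto. Qed.

Lemma provable_clause2 H x y : clause G H [x; y] ->
  provable G (GP x) -> provable G (GP y) -> provable G H.
Proof. intros Hc Hx Hy; destruct (usable_clause2 Hc Hx Hy); eapply prov_intro; eauto. Qed.

Lemma provable_yields alpha y w :
  yields alpha y -> w <> [] -> provable G (GP (alpha, y ++ w, w)).
Proof.
  intros Hy; revert w; induction Hy as [|a g x _ IH|A alpha g y x Hr _ IHy _ IHx];
    intros w Hw; simpl.
  - exact (prov_intro (C1 G w) (fun _ (F : In _ []) => match F with end)).
  - exact (provable_clause1 (C2b G a g w (app_neq_nil_r x Hw)) (IH w Hw)).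
  - rewrite <- app_assoc.
    pose proof (app_neq_nil_r x Hw) as Hxw.
    exact (provable_clause2 (C3b G A alpha g (y ++ x ++ w) w Hr Hxw)
             (IHy _ Hxw) (IHx w Hw)).
Qed.

Lemma provable_left_corner_terminal a t g :
  left_corner_terminal a t -> provable G (GP (a :: g, [t], [])).
Proof.
  intro Ha; revert g; induction Ha as [t|A a alpha t Hr _ IH]; intros g.
  - exact (prov_intro (C2a G t g) (fun _ (F : In _ []) => match F with end)).
  - exact (provable_clause1 (C3a G A (a :: alpha) g [t] Hr) (IH alpha)).
Qed.

Lemma provable_reaches X t g x : reaches X g x ->
  left_corner_terminal (inl X) t -> provable G (GP (g, x ++ [t], [])).
Proof.
  intros Hg HX.
  assert (Ht : [t] <> []) by discriminate.
  induction Hg as [a g x _ IH|A alpha g y x Hr Hy _ IH|g|A alpha g x Hr _ IH]; simpl.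
  - exact (provable_clause1 (C2b G a g [] (app_neq_nil_r x Ht)) IH).
  - rewrite <- app_assoc.
    pose proof (app_neq_nil_r x Ht) as Hxt.
    exact (provable_clause2 (C3b G A alpha g (y ++ x ++ [t]) [] Hr Hxt)
             (provable_yields Hy Hxt) IH).
  - apply provable_left_corner_terminal, HX.
  - exact (provable_clause1 (C3a G A alpha g (x ++ [t]) Hr) IH).
Qed.

Lemma parent_of_usable l H body x : defined_goal G l H ->
  usable_clause G H body -> In x body -> parent G l H (GP x).
Proof.
  intros Hd Hu Hx; repeat split; eauto using def_step.
Qed.

Lemma defined_goal_reaches l X t g x : reaches X g x ->
  left_corner_terminal (inl X) t -> defined_goal G l (GP (g, x ++ [t], [])) ->
  exists s, defined_goal G l (GP (inl X :: s, [t], [])).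
Proof.
  intros Hg HX.
  assert (Ht : [t] <> []) by discriminate.
  induction Hg as [a g x Hg IH|A alpha g y x Hr Hy Hg IH|g|A alpha g x Hr Hg IH];
    intro Hd; simpl in Hd; eauto.
  - apply IH, (def_step _ Hd (usable_clause1 (C2b G a g [] (app_neq_nil_r x Ht))
                                (provable_reaches Hg HX))).
    left; reflexivity.
  - rewrite <- app_assoc in Hd; pose proof (app_neq_nil_r x Ht) as Hxt.
    apply IH, (def_step _ Hd (usable_clause2 (C3b G A alpha g (y ++ x ++ [t]) [] Hr Hxt)
                                (provable_yields Hy Hxt) (provable_reaches Hg HX))).
    right; left; reflexivity.
  - apply IH, (def_step _ Hd (usable_clause1 (C3a G A alpha g (x ++ [t]) Hr)
                                (provable_reaches Hg HX))).
    left; reflexivity.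
Qed.

Lemma ancestor_defined l H C : ancestor G l H C -> defined_goal G l C.
Proof. induction 1 as [H C (_ & Hd & _)|]; auto. Qed.

Lemma ancestor_GP l H C : ancestor G l H C -> exists x, C = GP x.
Proof. induction 1 as [H C (_ & _ & body & x & _ & _ & ->)|]; eauto. Qed.

(* The witness [s'] does not depend on the starting context [s], so a
   left-corner cycle X ->L X yields a cycle of goals. *)
Lemma ancestor_of_left_corner l t A B : left_corner G A B ->
  left_corner_terminal (inl B) t -> exists s', forall s,
    defined_goal G l (GP (inl A :: s, [t], [])) ->
    ancestor G l (GP (inl A :: s, [t], [])) (GP (inl B :: s', [t], [])).
Proof.
  induction 1 as [A B [beta Hr]|A C B HAC IHAC HCB IHCB]; intros HB.
  - exists beta; intros s Hd; apply t_step.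
    apply (parent_of_usable _ Hd (usable_clause1 (C3a G A (inl B :: beta) s [t] Hr)
                                  (provable_left_corner_terminal beta HB))).
    left; reflexivity.
  - destruct (IHAC (left_corner_terminal_of_left_corner HCB HB)) as [s1 H1].
    destruct (IHCB HB) as [s2 H2].
    exists s2; intros s Hd.
    eapply t_trans; [exact (H1 s Hd)|].
    apply H2; eapply ancestor_defined, H1, Hd.
Qed.

Definition descent (b b' : list sym) : Prop :=
  exists A beta, b = inl A :: beta /\ In (A, b') (rules G).

Lemma descents_left_corner b b' : clos_trans _ descent b b' ->
  exists A beta, b = inl A :: beta /\
    forall B beta', b' = inl B :: beta' -> left_corner G A B.
Proof.
  intro H; apply clos_trans_tn1 in H.
  induction H as [b' (A & beta & -> & Hr)|b1 b' (A1 & beta1 & -> & Hr) _ IH].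
  - exists A, beta; split; [reflexivity|].
    intros B beta' ->; apply t_step; exists beta'; exact Hr.
  - destruct IH as (A & beta & -> & HA).
    exists A, beta; split; [reflexivity|].
    intros B beta' ->.
    apply t_trans with A1; [eapply HA; reflexivity | apply t_step; exists beta'; exact Hr].
Qed.

Section NoEpsilon.
Hypothesis no_eps : no_eps_rules G.

Definition consumption_bound (g : goal T NT) : Prop :=
  match g with
  | GP (b, u, w) => length w <= length u /\ (b <> [] -> w <> [] -> length w < length u)
  | GQ _ _ => True
  end.

Lemma provable_consumption_bound g : provable G g -> consumption_bound g.
Proof.
  induction 1 as [H body Hc _ IH].
  destruct Hc as [l|u|a beta|a beta v w Hv|A alpha beta u Hr|A alpha beta u v w Hr Hv];
    simpl; auto.
  - split; [lia | intros Hb _; congruence].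
  - destruct (IH _ (or_introl eq_refl)) as [Hle _]; simpl; split; intros; lia.
  - split; [lia | intros _ Hw; congruence].
  - pose proof (IH _ (or_introl eq_refl)) as [_ Hlt].
    pose proof (IH _ (or_intror (or_introl eq_refl))) as [Hle _].
    specialize (Hlt (no_eps A Hr) Hv); split; intros; lia.
Qed.

Lemma parent_consumes_or_descends l b u w b' u' w' :
  parent G l (GP (b, u, w)) (GP (b', u', w')) ->
  length u' < length u \/ (length u' = length u /\ descent b b').
Proof.
  intros (_ & _ & body & x & [Hc Hp] & Hin & E); injection E as E; subst x.
  inversion Hc as [|?|?|a beta v w0 Hv|A alpha beta u0 Hr|A alpha beta u0 v w0 Hr Hv];
    subst; simpl in Hin.
  - destruct Hin.
  - destruct Hin.
  - destruct Hin as [E|[]]; injection E; intros; subst; left; simpl; lia.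
  - destruct Hin as [E|[]]; injection E; intros; subst; right; split; [reflexivity|].
    exists A, beta; auto.
  - destruct Hin as [E|[E|[]]]; injection E; intros; subst.
    + right; split; [reflexivity|]; exists A, beta; auto.
    + left; apply (provable_consumption_bound (Hp _ (or_introl eq_refl)));
        [exact (no_eps A Hr) | exact Hv].
Qed.

Lemma ancestor_consumes_or_descends l b u w b' u' w' :
  ancestor G l (GP (b, u, w)) (GP (b', u', w')) ->
  length u' < length u \/
  (length u' = length u /\ clos_trans _ descent b b').
Proof.
  intro H; apply clos_trans_t1n in H.
  remember (GP (b, u, w)) as H0 eqn:EH; remember (GP (b', u', w')) as C0 eqn:EC.
  revert b u w EH EC.
  induction H as [H C Hp|H Y C Hp _ IH]; intros b u w -> ->.
  - destruct (parent_consumes_or_descends Hp) as [|[? ?]]; auto using t_step.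
  - destruct Hp as (H1 & H2 & body & [[b1 u1] w1] & Hu & Hin & ->).
    assert (Hp : parent G l (GP (b, u, w)) (GP (b1, u1, w1))) by (repeat split; eauto).
    destruct (IH _ _ _ eq_refl eq_refl) as [|[? ?]];
      destruct (parent_consumes_or_descends Hp) as [|[? ?]]; try (left; lia).
    right; split; [lia | eapply t_trans; eauto using t_step].
Qed.

Lemma lc_cyclic_of_expl_cyclic l : expl_cyclic G l -> lc_cyclic G.
Proof.
  intros (C & _ & HC).
  destruct (ancestor_GP HC) as [[[b u] w] ->].
  destruct (ancestor_consumes_or_descends HC) as [|[_ Hd]]; [lia|].
  destruct (descents_left_corner Hd) as (A & beta & -> & HA).
  exists A; eapply HA; reflexivity.
Qed.

Lemma yields_nonempty g x : yields g x -> g <> [] -> x <> [].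
Proof.
  induction 1 as [| |A alpha g y x Hr Hy IHy]; intros Hg;
    [congruence | discriminate |].
  assert (y <> []) by (apply IHy; exact (no_eps A Hr)).
  destruct y; [congruence | discriminate].
Qed.

Lemma yields_left_corner_terminal a g t z :
  yields (a :: g) (t :: z) -> left_corner_terminal a t.
Proof.
  intro H; remember (a :: g) as g0; remember (t :: z) as x0.
  revert a g t z Heqg0 Heqx0.
  induction H as [|b g x H _|A alpha g y x Hr Hy IHy]; intros a0 g0 t z E1 E2;
    inversion E1; subst.
  - inversion E2; subst; constructor.
  - destruct alpha as [|a1 alpha]; [destruct (no_eps A Hr eq_refl)|].
    destruct y as [|t1 y]; [destruct (yields_nonempty Hy ltac:(discriminate) eq_refl)|].
    inversion E2; subst; econstructor; eauto.
Qed.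

Lemma reachable_by_prefix X : no_useless_nonterminal G -> exists wp t,
  is_prefix G (wp ++ [t]) /\ reaches X [inl (start G)] wp /\
  left_corner_terminal (inl X) t.
Proof.
  intro Huseful.
  destruct (classic (exists alpha, In (X, alpha) (rules G) /\ useful_rule G X alpha))
    as [(alpha & Hr & p & q & w & Hstart & Hend) | Hnone].
  2: { destruct (Huseful X); intros alpha Hr Hu; apply Hnone; eauto. }
  destruct (yields_app_inv _ _ (derives_yields _ Hend)) as (wp & w2 & -> & Hp & H2).
  destruct (yields_app_inv _ _ H2) as (wa & wq & -> & Ha & Hq).
  destruct alpha as [|a alpha]; [destruct (no_eps X Hr eq_refl)|].
  destruct wa as [|t z]; [destruct (yields_nonempty Ha ltac:(discriminate) eq_refl)|].
  exists wp, t; repeat split.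
  - apply app_neq_nil_r; discriminate.
  - exists (z ++ wq); rewrite <- app_assoc; simpl.
    eapply rt_trans; [exact Hstart|].
    eapply rt_trans; [apply rt_step; exists p, q, X, (a :: alpha); eauto | exact Hend].
  - eapply derives_reaches; eauto.
  - econstructor; [exact Hr | eapply yields_left_corner_terminal; eauto].
Qed.

End NoEpsilon.

Lemma expl_cyclic_of_left_corner_cycle X wp t :
  reaches X [inl (start G)] wp -> left_corner_terminal (inl X) t ->
  left_corner G X X -> expl_cyclic G (wp ++ [t]).
Proof.
  intros Hreach HX Hcyc.
  assert (Hroot : defined_goal G (wp ++ [t]) (GP ([inl (start G)], wp ++ [t], []))).
  { apply (def_step _ (def_root G (wp ++ [t]))
             (usable_clause1 (C0 G (wp ++ [t])) (provable_reaches Hreach HX))).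
    left; reflexivity. }
  destruct (defined_goal_reaches Hreach HX Hroot) as [s Hs].
  destruct (ancestor_of_left_corner (wp ++ [t]) Hcyc HX) as [s' Hanc].
  exists (GP (inl X :: s', [t], [])).
  assert (Hd : defined_goal G (wp ++ [t]) (GP (inl X :: s', [t], [])))
    by exact (ancestor_defined (Hanc s Hs)).
  split; [exact Hd | exact (Hanc s' Hd)].
Qed.

End Grammar.

Theorem theorem2 (T NT : Type) (HT : Finite T) (HNT : Finite NT)
    (G : grammar T NT) :
  no_eps_rules G -> no_useless_nonterminal G ->
  ((exists l, is_prefix G l /\ expl_cyclic G l) <-> lc_cyclic G).
Proof.
  intros Hne Huseful; split.
  - intros (l & _ & Hcyc); exact (lc_cyclic_of_expl_cyclic Hne Hcyc).
  - intros [X HX].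
    destruct (reachable_by_prefix Hne X Huseful) as (wp & t & Hpre & Hreach & Ht).
    exists (wp ++ [t]); split; [exact Hpre|].
    exact (expl_cyclic_of_left_corner_cycle Hreach Ht HX).
Qed.
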